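(* Let $\pi$ be a polygon without self-intersections with edges $\pi_1,\dots,\pi_R$, and let $\lambda_r=\lambda(v_r)$ where $v_r$ is a direction vector of $\pi_r$. For $k\in\mathbb N$ let $B_k\pi=\{kx:x\in\pi\}$ and let $L_k\pi$ be the lattice approximation of $B_k\pi$. Then $$\lim_{k\to\infty}\frac{|L_k\pi|}{\operatorname{length}B_k\pi}=\sum_{r=1}^R\frac{1}{\sqrt{1+\lambda_r^2}}\,\frac{\operatorname{length}\pi_r}{\operatorname{length}\pi}.$$
   Context: $\lambda(v)=\min(|v_2/v_1|,|v_1/v_2|)\in[0,1]$ for $v=(v_1,v_2)\ne0$. Lattice approximation of a nondegenerate segment $s$ with direction $v$: if $|v_2|\le|v_1|$ write $s=\{(x,\lambda x+b):x\in I\}$, $\lambda=v_2/v_1$, $L(s)=\{(z,\lfloor\lambda z+b\rfloor):z\in I\cap\mathbb Z\}$; otherwise write $s=\{(\mu y+b,y):y\in J\}$, $\mu=v_1/v_2$, $L(s)=\{(\lfloor\mu z+b\rfloor,z):z\in J\cap\mathbb Z\}$. The lattice approximation of a polygon is the union of the lattice approximations of its edges. Lengths are Euclidean. *)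

From Stdlib Require Import Reals ZArith List.
Open Scope R_scope.

Definition pt := (R * R)%type.

Definition edist (a b : pt) : R :=
  sqrt ((fst b - fst a) ^ 2 + (snd b - snd a) ^ 2).

Definition on_seg (a b x : pt) : Prop :=
  exists t, 0 <= t <= 1 /\
    fst x = fst a + t * (fst b - fst a) /\
    snd x = snd a + t * (snd b - snd a).

(* lambda(v) = min(|v2/v1|, |v1/v2|) for v <> 0, written by cases
   (the smaller of the two ratios is the one with the larger denominator). *)
Definition lam (v : pt) : R :=
  if Rle_dec (Rabs (snd v)) (Rabs (fst v))
  then Rabs (snd v / fst v) else Rabs (fst v / snd v).

(* floor : R -> Z  (Int_part r = up r - 1 is the floor of r). *)
Definition Zfloor (x : R) : Z := Int_part x.

Definition lattice_seg (a b : pt) (z : Z * Z) : Prop :=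
  let v1 := fst b - fst a in
  let v2 := snd b - snd a in
  if Rle_dec (Rabs v2) (Rabs v1) then
    (* s = {(x, l x + c) : x in I} *)
    let l := v2 / v1 in
    let c := snd a - l * fst a in
    Rmin (fst a) (fst b) <= IZR (fst z) <= Rmax (fst a) (fst b) /\
    snd z = Zfloor (l * IZR (fst z) + c)
  else
    (* s = {(m y + c, y) : y in J} *)
    let m := v1 / v2 in
    let c := fst a - m * snd a in
    Rmin (snd a) (snd b) <= IZR (snd z) <= Rmax (snd a) (snd b) /\
    fst z = Zfloor (m * IZR (snd z) + c).

(* A polygon with n vertices p 0, ..., p (n-1); edge r is [p r, p ((r+1) mod n)]. *)
Definition nxt (n i : nat) : nat := Nat.modulo (S i) n.

Definition simple_polygon (n : nat) (p : nat -> pt) : Prop :=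
  (3 <= n)%nat /\
  (forall i, (i < n)%nat -> p i <> p (nxt n i)) /\
  (forall i j x, (i < n)%nat -> (j < n)%nat -> i <> j ->
     on_seg (p i) (p (nxt n i)) x -> on_seg (p j) (p (nxt n j)) x ->
     (j = nxt n i /\ x = p j) \/ (i = nxt n j /\ x = p i)).

Definition edge_dir (n : nat) (p : nat -> pt) (r : nat) : pt :=
  (fst (p (nxt n r)) - fst (p r), snd (p (nxt n r)) - snd (p r)).

Fixpoint rsum (f : nat -> R) (n : nat) : R :=
  match n with O => 0 | S m => rsum f m + f m end.

Definition perimeter (n : nat) (p : nat -> pt) : R :=
  rsum (fun r => edist (p r) (p (nxt n r))) n.

Definition scale (k : nat) (p : nat -> pt) : nat -> pt :=
  fun i => (INR k * fst (p i), INR k * snd (p i)).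

Definition lattice_poly (n : nat) (p : nat -> pt) (z : Z * Z) : Prop :=
  exists r, (r < n)%nat /\ lattice_seg (p r) (p (nxt n r)) z.

Definition is_card (P : Z * Z -> Prop) (N : nat) : Prop :=
  exists l : list (Z * Z), NoDup l /\ (forall z, In z l <-> P z) /\ length l = N.

From Stdlib Require Import Reals ZArith List Lra Lia FinFun.
Open Scope R_scope.
Import ListNotations.

(** Along its major axis (the coordinate axis on which the
    direction vector has the larger component) an edge [a,b] is the graph of a
    line of slope at most 1 over an interval of length [extent a b]; its lattice
    approximation has exactly one point per integer of that interval, so the
    [k]-dilated edge carries [k * extent a b + O(1)] lattice points, and
    [extent a b = edist a b / sqrt (1 + lambda^2)].  Two distinct edges of a
    simple polygon meet at most once; hence the common lattice points of their
    dilates are confined, for large [k], to a window of bounded width along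
    the major axis (crossing lines, parallel lines drifting apart, or collinear
    edges touching at one vertex).  By a Bonferroni-type count the number of
    points of the union [L_k pi] is then [k * sum_r extent(pi_r) + O(1)], and
    dividing by [length (B_k pi) = k * length pi] gives the limit. *)

Lemma Zfloor_spec (x : R) : IZR (Zfloor x) <= x < IZR (Zfloor x) + 1.
Proof. unfold Zfloor. destruct (base_Int_part x). fold (Int_part x). lra. Qed.

Lemma Zfloor_ge_iff (z : Z) (x : R) : (z <= Zfloor x)%Z <-> IZR z <= x.
Proof.
  destruct (Zfloor_spec x). split; intro Hz.
  - apply IZR_le in Hz. lra.
  - assert (IZR z < IZR (Zfloor x + 1)) as Hlt by (rewrite plus_IZR; lra).
    apply lt_IZR in Hlt. lia.
Qed.

Definition Zceil (x : R) : Z := (- Zfloor (- x))%Z.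

Lemma Zceil_spec (x : R) : x <= IZR (Zceil x) < x + 1.
Proof. unfold Zceil. rewrite opp_IZR. destruct (Zfloor_spec (- x)). lra. Qed.

Lemma Zceil_le_iff (z : Z) (x : R) : (Zceil x <= z)%Z <-> x <= IZR z.
Proof.
  unfold Zceil. pose proof (Zfloor_ge_iff (- z) (- x)) as Hf. rewrite opp_IZR in Hf.
  split; intro Hz.
  - assert (- z <= Zfloor (- x))%Z as H' by lia. apply Hf in H'. lra.
  - assert (- IZR z <= - x) as H' by lra. apply Hf in H'. lia.
Qed.

Lemma exists_nat_gt r : exists N : nat, r < INR N.
Proof.
  destruct (archimed r) as [H1 H2]. destruct (Z_le_gt_dec (up r) 0) as [Hle|Hgt].
  - exists O. simpl. apply IZR_le in Hle. lra.
  - exists (Z.to_nat (up r)). rewrite INR_IZR_INZ, Z2Nat.id by lia. lra.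
Qed.

Fixpoint zrange (s : Z) (m : nat) : list Z :=
  match m with O => [] | S m => s :: zrange (s + 1) m end.

Lemma In_zrange s m x : In x (zrange s m) <-> (s <= x < s + Z.of_nat m)%Z.
Proof. revert s. induction m as [|m IH]; intro s; simpl; [|rewrite IH]; lia. Qed.

Lemma zrange_length s m : length (zrange s m) = m.
Proof. revert s; induction m; intro s; simpl; auto. Qed.

Lemma NoDup_zrange s m : NoDup (zrange s m).
Proof.
  revert s; induction m; intro s; simpl; constructor; auto.
  rewrite In_zrange. lia.
Qed.

Definition int_count (A B : R) : nat := Z.to_nat (Zfloor B - Zceil A + 1).
Definition ints_between (A B : R) : list Z := zrange (Zceil A) (int_count A B).

Lemma In_ints_between A B x : In x (ints_between A B) <-> A <= IZR x <= B.
Proof.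
  unfold ints_between, int_count. rewrite In_zrange, <- Zceil_le_iff, <- Zfloor_ge_iff.
  lia.
Qed.

Lemma NoDup_ints_between A B : NoDup (ints_between A B).
Proof. apply NoDup_zrange. Qed.

Lemma int_count_bounds A B : A <= B ->
  B - A - 1 <= INR (int_count A B) <= B - A + 1.
Proof.
  intro HAB. unfold int_count. destruct (Zfloor_spec B), (Zceil_spec A).
  assert (IZR (Zceil A) < IZR (Zfloor B + 2)) as Hlt by (rewrite plus_IZR; lra).
  apply lt_IZR in Hlt.
  rewrite INR_IZR_INZ, Z2Nat.id, plus_IZR, minus_IZR by lia. lra.
Qed.

Lemma ints_in_window_length (xs : list Z) (A W : R) :
  NoDup xs -> 0 <= W -> (forall x, In x xs -> A <= IZR x <= A + W) ->
  INR (length xs) <= W + 1.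
Proof.
  intros Hnd HW Hin.
  assert (Hcount := int_count_bounds A (A + W) ltac:(lra)).
  eapply Rle_trans; [|replace (W + 1) with (A + W - A + 1) by ring; apply Hcount].
  apply le_INR. rewrite <- (zrange_length (Zceil A) (int_count A (A + W))).
  apply NoDup_incl_length; auto.
  intros x Hx. apply In_ints_between, Hin, Hx.
Qed.

(** * Normal form of the lattice approximation of a segment *)

(* Writing [orient] for the swap of coordinates when the
   y-axis is major, the segment is the graph of [u |-> slope * u + icept]
   over the major-coordinate range [lo, hi]. *)
Definition x_major (a b : pt) : bool :=
  if Rle_dec (Rabs (snd b - snd a)) (Rabs (fst b - fst a)) then true else false.
Definition slope (a b : pt) : R :=
  if x_major a b then (snd b - snd a) / (fst b - fst a)
  else (fst b - fst a) / (snd b - snd a).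
Definition icept (a b : pt) : R :=
  if x_major a b then snd a - slope a b * fst a else fst a - slope a b * snd a.
Definition lo (a b : pt) : R :=
  if x_major a b then Rmin (fst a) (fst b) else Rmin (snd a) (snd b).
Definition hi (a b : pt) : R :=
  if x_major a b then Rmax (fst a) (fst b) else Rmax (snd a) (snd b).
Definition extent (a b : pt) : R :=
  if x_major a b then Rabs (fst b - fst a) else Rabs (snd b - snd a).

Definition orient (xm : bool) (z : Z * Z) : Z * Z := if xm then z else (snd z, fst z).

Definition on_floor_graph (l c lo hi : R) (w : Z * Z) : Prop :=
  lo <= IZR (fst w) <= hi /\ snd w = Zfloor (l * IZR (fst w) + c).

Lemma orient_invol xm z : orient xm (orient xm z) = z.
Proof. destruct xm, z; reflexivity. Qed.

Lemma orient_cross xm1 xm2 w : xm1 <> xm2 -> orient xm2 (orient xm1 w) = (snd w, fst w).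
Proof. destruct xm1, xm2, w; simpl; congruence. Qed.

Lemma lattice_seg_normal a b z :
  lattice_seg a b z <->
  on_floor_graph (slope a b) (icept a b) (lo a b) (hi a b) (orient (x_major a b) z).
Proof.
  unfold lattice_seg, on_floor_graph, icept, lo, hi, orient, slope, x_major; cbv zeta.
  destruct (Rle_dec _ _); simpl; tauto.
Qed.

Definition seg_points (a b : pt) : list (Z * Z) :=
  map (fun u => orient (x_major a b) (u, Zfloor (slope a b * IZR u + icept a b)))
      (ints_between (lo a b) (hi a b)).

Lemma In_seg_points a b z : In z (seg_points a b) <-> lattice_seg a b z.
Proof.
  rewrite lattice_seg_normal. unfold seg_points. rewrite in_map_iff. split.
  - intros [u [<- Hu]]. rewrite orient_invol. apply In_ints_between in Hu. split; simpl; auto.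
  - intros [Hrange Hgraph]. exists (fst (orient (x_major a b) z)). split.
    + rewrite <- Hgraph, <- surjective_pairing. apply orient_invol.
    + apply In_ints_between. auto.
Qed.

Lemma NoDup_seg_points a b : NoDup (seg_points a b).
Proof.
  apply Injective_map_NoDup; [|apply NoDup_ints_between].
  intros u v Huv. apply (f_equal (orient (x_major a b))) in Huv.
  rewrite !orient_invol in Huv. congruence.
Qed.

Lemma seg_points_length a b : length (seg_points a b) = int_count (lo a b) (hi a b).
Proof. unfold seg_points, ints_between. rewrite length_map. apply zrange_length. Qed.

Lemma x_major_true_neq a b : a <> b -> x_major a b = true -> fst b - fst a <> 0.
Proof.
  unfold x_major. destruct (Rle_dec _ _) as [Hle|]; [|discriminate]. intros Hab _ E.
  rewrite E, Rabs_R0 in Hle.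
  destruct (Req_dec (snd b - snd a) 0) as [E'|E'].
  - apply Hab. destruct a, b; simpl in *. f_equal; lra.
  - apply Rabs_pos_lt in E'. lra.
Qed.

Lemma x_major_true_le a b : x_major a b = true -> Rabs (snd b - snd a) <= Rabs (fst b - fst a).
Proof. unfold x_major. destruct (Rle_dec _ _); [auto|discriminate]. Qed.

Lemma x_major_false_lt a b :
  x_major a b = false -> Rabs (fst b - fst a) < Rabs (snd b - snd a).
Proof. unfold x_major. destruct (Rle_dec _ _); [discriminate|]. intros _. lra. Qed.

Lemma x_major_false_neq a b : x_major a b = false -> snd b - snd a <> 0.
Proof.
  intros H E. apply x_major_false_lt in H. rewrite E, Rabs_R0 in H.
  pose proof (Rabs_pos (fst b - fst a)). lra.
Qed.

Lemma extent_pos a b : a <> b -> 0 < extent a b.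
Proof.
  intro Hab. unfold extent. destruct (x_major a b) eqn:E; apply Rabs_pos_lt.
  - apply x_major_true_neq; auto.
  - apply x_major_false_neq; auto.
Qed.

Lemma Rminmax_diff x y : Rmax x y - Rmin x y = Rabs (y - x).
Proof.
  unfold Rmax, Rmin. destruct (Rle_dec x y).
  - rewrite Rabs_pos_eq; lra.
  - rewrite Rabs_left; lra.
Qed.

Lemma hi_minus_lo a b : hi a b - lo a b = extent a b.
Proof. unfold hi, lo, extent. destruct (x_major a b); apply Rminmax_diff. Qed.

Lemma ratio_abs_le (u v : R) : v <> 0 -> Rabs u <= Rabs v -> Rabs (u / v) <= 1.
Proof.
  intros Hv Huv. unfold Rdiv. rewrite Rabs_mult, Rabs_inv.
  apply Rmult_le_reg_r with (Rabs v); [apply Rabs_pos_lt; auto|].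
  rewrite Rmult_assoc, Rinv_l by (apply Rabs_no_R0; auto). lra.
Qed.

Lemma slope_abs_lt_1 a b : x_major a b = false -> Rabs (slope a b) < 1.
Proof.
  intro E. unfold slope. rewrite E.
  pose proof (x_major_false_neq _ _ E) as Hv. apply x_major_false_lt in E.
  unfold Rdiv. rewrite Rabs_mult, Rabs_inv.
  apply Rmult_lt_reg_r with (Rabs (snd b - snd a)); [apply Rabs_pos_lt; auto|].
  rewrite Rmult_assoc, Rinv_l by (apply Rabs_no_R0; auto). lra.
Qed.

Lemma slope_abs_le_1 a b : Rabs (slope a b) <= 1.
Proof.
  destruct (x_major a b) eqn:E; [|apply Rlt_le, slope_abs_lt_1; auto].
  unfold slope. rewrite E. apply x_major_true_le in E.
  destruct (Req_dec (fst b - fst a) 0) as [Z|Z].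
  - rewrite Z. unfold Rdiv. rewrite Rinv_0, Rmult_0_r, Rabs_R0. lra.
  - apply ratio_abs_le; auto.
Qed.

Lemma extent_edist a b : a <> b ->
  / sqrt (1 + lam (fst b - fst a, snd b - snd a) ^ 2) * edist a b = extent a b.
Proof.
  intro Hab. unfold lam, extent, edist; cbn [fst snd].
  assert (Hnorm : forall u v, v <> 0 ->
    / sqrt (1 + Rabs (u / v) ^ 2) * sqrt (v ^ 2 + u ^ 2) = Rabs v).
  { intros u v Hv. rewrite pow2_abs.
    assert (0 < 1 + (u / v) ^ 2) by (pose proof (pow2_ge_0 (u / v)); lra).
    replace (v ^ 2 + u ^ 2) with (v ^ 2 * (1 + (u / v) ^ 2)) by (field; auto).
    rewrite sqrt_mult_alt, <- (pow2_abs v), sqrt_pow2 by (apply pow2_ge_0 || apply Rabs_pos).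
    field. apply Rgt_not_eq, sqrt_lt_R0; auto. }
  destruct (x_major a b) eqn:E.
  - pose proof (x_major_true_neq _ _ Hab E) as Hv.
    unfold x_major in E. destruct (Rle_dec _ _); [|discriminate]. apply Hnorm; auto.
  - pose proof (x_major_false_neq _ _ E) as Hv.
    unfold x_major in E. destruct (Rle_dec _ _); [discriminate|].
    rewrite (Rplus_comm ((fst b - fst a) ^ 2)). apply Hnorm; auto.
Qed.

Definition dilate (k : R) (a : pt) : pt := (k * fst a, k * snd a).

Lemma Rabs_dilate_diff k x y : 0 < k -> Rabs (k * y - k * x) = k * Rabs (y - x).
Proof.
  intro Hk. replace (k * y - k * x) with (k * (y - x)) by ring.
  rewrite Rabs_mult, Rabs_pos_eq by lra. reflexivity.
Qed.

Lemma x_major_dilate k a b : 0 < k -> x_major (dilate k a) (dilate k b) = x_major a b.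
Proof.
  intro Hk. unfold x_major, dilate; simpl. rewrite !Rabs_dilate_diff by auto.
  destruct (Rle_dec (k * _) _) as [H|H]; destruct (Rle_dec (Rabs _) _) as [H'|H']; auto.
  - exfalso. apply H'. apply Rmult_le_reg_l with k; auto.
  - exfalso. apply H. apply Rmult_le_compat_l; lra.
Qed.

Lemma slope_dilate k a b : 0 < k -> a <> b -> slope (dilate k a) (dilate k b) = slope a b.
Proof.
  intros Hk Hab. unfold slope. rewrite x_major_dilate by auto. unfold dilate; simpl.
  replace (k * fst b - k * fst a) with (k * (fst b - fst a)) by ring.
  replace (k * snd b - k * snd a) with (k * (snd b - snd a)) by ring.
  destruct (x_major a b) eqn:E.
  - apply x_major_true_neq in E; auto. field. split; lra.
  - apply x_major_false_neq in E. field. split; lra.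
Qed.

Lemma icept_dilate k a b : 0 < k -> a <> b ->
  icept (dilate k a) (dilate k b) = k * icept a b.
Proof.
  intros Hk Hab. unfold icept. rewrite slope_dilate, x_major_dilate by auto.
  unfold dilate; simpl. destruct (x_major a b); ring.
Qed.

Lemma Rmin_dilate k x y : 0 < k -> Rmin (k * x) (k * y) = k * Rmin x y.
Proof.
  intro Hk. unfold Rmin.
  destruct (Rle_dec (k * x) (k * y)) as [H|H]; destruct (Rle_dec x y) as [H'|H']; auto.
  - exfalso. apply H'. apply Rmult_le_reg_l with k; auto.
  - exfalso. apply H. apply Rmult_le_compat_l; lra.
Qed.

Lemma Rmax_dilate k x y : 0 < k -> Rmax (k * x) (k * y) = k * Rmax x y.
Proof.
  intro Hk. unfold Rmax.
  destruct (Rle_dec (k * x) (k * y)) as [H|H]; destruct (Rle_dec x y) as [H'|H']; auto.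
  - exfalso. apply H'. apply Rmult_le_reg_l with k; auto.
  - exfalso. apply H. apply Rmult_le_compat_l; lra.
Qed.

Lemma lo_dilate k a b : 0 < k -> lo (dilate k a) (dilate k b) = k * lo a b.
Proof.
  intro Hk. unfold lo. rewrite x_major_dilate by auto. unfold dilate; simpl.
  destruct (x_major a b); apply Rmin_dilate; auto.
Qed.

Lemma hi_dilate k a b : 0 < k -> hi (dilate k a) (dilate k b) = k * hi a b.
Proof.
  intro Hk. unfold hi. rewrite x_major_dilate by auto. unfold dilate; simpl.
  destruct (x_major a b); apply Rmax_dilate; auto.
Qed.

Lemma lattice_seg_dilate k a b z : 0 < k -> a <> b ->
  lattice_seg (dilate k a) (dilate k b) z <->
  on_floor_graph (slope a b) (k * icept a b) (k * lo a b) (k * hi a b)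
                 (orient (x_major a b) z).
Proof.
  intros Hk Hab. rewrite lattice_seg_normal.
  rewrite x_major_dilate, slope_dilate, icept_dilate, lo_dilate, hi_dilate by auto.
  reflexivity.
Qed.

Lemma seg_points_dilate_length k a b : 0 < k ->
  k * extent a b - 1 <= INR (length (seg_points (dilate k a) (dilate k b)))
  <= k * extent a b + 1.
Proof.
  intro Hk. rewrite seg_points_length, lo_dilate, hi_dilate by auto.
  assert (Hext : k * hi a b - k * lo a b = k * extent a b)
    by (rewrite <- hi_minus_lo; ring).
  assert (0 <= extent a b) by (unfold extent; destruct (x_major a b); apply Rabs_pos).
  assert (Hrange : k * lo a b <= k * hi a b) by nra.
  pose proof (int_count_bounds _ _ Hrange). lra.
Qed.

(** * Two edges share only boundedly many lattice points *)

Definition meet_at_most_once (a1 b1 a2 b2 : pt) : Prop :=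
  forall x y, on_seg a1 b1 x -> on_seg a2 b2 x -> on_seg a1 b1 y -> on_seg a2 b2 y -> x = y.

Lemma floor_eq_dist l1 c1 l2 c2 x :
  Zfloor (l1 * x + c1) = Zfloor (l2 * x + c2) -> Rabs ((l1 - l2) * x + (c1 - c2)) < 1.
Proof.
  intro E. destruct (Zfloor_spec (l1 * x + c1)), (Zfloor_spec (l2 * x + c2)).
  rewrite E in *. apply Rabs_def1; lra.
Qed.

Lemma lin_window_pos d e : 0 < d ->
  forall x, Rabs (d * x + e) < 1 -> (-1 - e) / d <= x <= (-1 - e) / d + 2 / d.
Proof.
  intros Hd x Hx. apply Rabs_def2 in Hx.
  split; apply Rmult_le_reg_r with d; auto.
  - replace ((-1 - e) / d * d) with (-1 - e) by (field; lra). lra.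
  - replace (((-1 - e) / d + 2 / d) * d) with (1 - e) by (field; lra). lra.
Qed.

Lemma lin_window d e : d <> 0 ->
  exists A, forall x, Rabs (d * x + e) < 1 -> A <= x <= A + 2 / Rabs d.
Proof.
  intro Hd. destruct (Rlt_or_le 0 d) as [Hp|Hn].
  - exists ((-1 - e) / d). rewrite Rabs_pos_eq by lra. apply lin_window_pos; auto.
  - exists ((-1 - - e) / - d). rewrite Rabs_left by lra. intros x Hx.
    apply lin_window_pos; [lra|].
    replace (- d * x + - e) with (- (d * x + e)) by ring. rewrite Rabs_Ropp. auto.
Qed.

Lemma cross_window l m c d : Rabs (l * m) < 1 -> Rabs m <= 1 ->
  exists A, forall x y : Z,
    y = Zfloor (l * IZR x + c) -> x = Zfloor (m * IZR y + d) ->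
    A <= IZR x <= A + 4 / (1 - l * m).
Proof.
  intros Hlm Hm. set (q := 1 - l * m).
  assert (Hq : 0 < q) by (unfold q; apply Rabs_def2 in Hlm; lra).
  exists ((m * c + d - 2) / q). intros x y Hy Hx.
  destruct (Zfloor_spec (l * IZR x + c)) as [F1 F2]. rewrite <- Hy in F1, F2.
  destruct (Zfloor_spec (m * IZR y + d)) as [G1 G2]. rewrite <- Hx in G1, G2.
  set (e1 := l * IZR x + c - IZR y) in *. set (e2 := m * IZR y + d - IZR x) in *.
  assert (Hsolve : q * IZR x = m * c + d - m * e1 - e2) by (unfold q, e1, e2; ring).
  assert (Hme : Rabs (m * e1) <= e1).
  { rewrite Rabs_mult, (Rabs_pos_eq e1) by (unfold e1; lra).
    rewrite <- (Rmult_1_l e1) at 2. apply Rmult_le_compat_r; unfold e1; lra. }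
  pose proof (Rle_abs (m * e1)) as Hpos. pose proof (Rle_abs (- (m * e1))) as Hneg.
  rewrite Rabs_Ropp in Hneg. unfold e1, e2 in *.
  split; apply Rmult_le_reg_l with q; auto.
  - replace (q * ((m * c + d - 2) / q)) with (m * c + d - 2) by (field; lra). lra.
  - replace (q * ((m * c + d - 2) / q + 4 / q)) with (m * c + d + 2) by (field; lra). lra.
Qed.

Definition graph_point (xm : bool) (l c u : R) : pt :=
  if xm then (u, l * u + c) else (l * u + c, u).

Lemma param_in_unit x y u : x <> y -> Rmin x y <= u <= Rmax x y ->
  0 <= (u - x) / (y - x) <= 1.
Proof.
  intros Hxy Hu. unfold Rmin, Rmax in Hu. destruct (Rle_dec x y).
  - assert (0 < y - x) by lra.
    split; apply Rmult_le_reg_r with (y - x); auto;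
      unfold Rdiv; rewrite ?Rmult_assoc, ?Rinv_l by lra; lra.
  - assert (0 < x - y) by lra. replace ((u - x) / (y - x)) with ((x - u) / (x - y)) by (field; lra).
    split; apply Rmult_le_reg_r with (x - y); auto;
      unfold Rdiv; rewrite ?Rmult_assoc, ?Rinv_l by lra; lra.
Qed.

Lemma graph_point_on_seg a b u : a <> b -> lo a b <= u <= hi a b ->
  on_seg a b (graph_point (x_major a b) (slope a b) (icept a b) u).
Proof.
  intros Hab Hu. unfold lo, hi, graph_point, icept, slope in *.
  destruct (x_major a b) eqn:E.
  - pose proof (x_major_true_neq _ _ Hab E) as Hv.
    exists ((u - fst a) / (fst b - fst a)).
    split; [apply param_in_unit; auto; lra|]. simpl. split; field; auto.
  - pose proof (x_major_false_neq _ _ E) as Hv.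
    exists ((u - snd a) / (snd b - snd a)).
    split; [apply param_in_unit; auto; lra|]. simpl. split; field; auto.
Qed.

Lemma collinear_ranges a1 b1 a2 b2 : a1 <> b1 -> a2 <> b2 ->
  x_major a1 b1 = x_major a2 b2 -> slope a1 b1 = slope a2 b2 -> icept a1 b1 = icept a2 b2 ->
  meet_at_most_once a1 b1 a2 b2 ->
  hi a2 b2 <= lo a1 b1 \/ hi a1 b1 <= lo a2 b2.
Proof.
  intros H1 H2 Ex El Ec Honce.
  destruct (Rlt_or_le (lo a1 b1) (hi a2 b2)) as [L1|L1]; [|auto].
  destruct (Rlt_or_le (lo a2 b2) (hi a1 b1)) as [L2|L2]; [|auto].
  exfalso. pose proof (hi_minus_lo a1 b1). pose proof (extent_pos _ _ H1).
  pose proof (hi_minus_lo a2 b2). pose proof (extent_pos _ _ H2).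
  set (u1 := Rmax (lo a1 b1) (lo a2 b2)). set (u2 := Rmin (hi a1 b1) (hi a2 b2)).
  assert (R1 : lo a1 b1 <= u1 /\ lo a2 b2 <= u1) by (unfold u1; split; [apply Rmax_l|apply Rmax_r]).
  assert (R2 : u2 <= hi a1 b1 /\ u2 <= hi a2 b2) by (unfold u2; split; [apply Rmin_l|apply Rmin_r]).
  assert (R3 : u1 < u2) by (unfold u1, u2, Rmax, Rmin; do 2 destruct (Rle_dec _ _); lra).
  set (g := graph_point (x_major a1 b1) (slope a1 b1) (icept a1 b1)).
  assert (Hon : forall u, u1 <= u <= u2 -> on_seg a1 b1 (g u) /\ on_seg a2 b2 (g u)).
  { intros u Hu. split; [|unfold g; rewrite Ex, El, Ec]; apply graph_point_on_seg; auto; lra. }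
  destruct (Hon u1) as [X1 X2]; [lra|]. destruct (Hon u2) as [Y1 Y2]; [lra|].
  pose proof (Honce _ _ X1 X2 Y1 Y2) as Heq. unfold g, graph_point in Heq.
  destruct (x_major a1 b1); injection Heq; lra.
Qed.

Lemma same_axis_window l1 c1 lo1 hi1 l2 c2 lo2 hi2 :
  (l1 = l2 -> c1 = c2 -> hi2 <= lo1 \/ hi1 <= lo2) ->
  exists (K : nat) (W : R), 0 <= W /\ forall k : nat, (K <= k)%nat -> exists A, forall w,
    on_floor_graph l1 (INR k * c1) (INR k * lo1) (INR k * hi1) w ->
    on_floor_graph l2 (INR k * c2) (INR k * lo2) (INR k * hi2) w ->
    A <= IZR (fst w) <= A + W.
Proof.
  intro Hline. destruct (Req_dec l1 l2) as [El|El]; [destruct (Req_dec c1 c2) as [Ec|Ec]|].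
  - (* one line: the ranges touch in at most one point *)
    exists O, 0. split; [lra|]. intros k _. pose proof (pos_INR k) as Hk.
    destruct (Hline El Ec) as [S|S]; [exists (INR k * lo1)|exists (INR k * lo2)];
      intros w [Hw1 _] [Hw2 _]; nra.
  - (* parallel lines at vertical distance [k |c1 - c2|]: eventually no common point *)
    assert (Hd : 0 < Rabs (c1 - c2)) by (apply Rabs_pos_lt; lra).
    destruct (exists_nat_gt (/ Rabs (c1 - c2))) as [K HK].
    exists K, 0. split; [lra|]. intros k Hk. exists 0. intros w [_ Hy1] [_ Hy2]. exfalso.
    rewrite Hy1 in Hy2. apply floor_eq_dist in Hy2. rewrite El in Hy2.
    replace ((l2 - l2) * IZR (fst w) + (INR k * c1 - INR k * c2))
      with (INR k * (c1 - c2)) in Hy2 by ring.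
    rewrite Rabs_mult, (Rabs_pos_eq (INR k)) in Hy2 by apply pos_INR.
    apply le_INR in Hk.
    assert (Hbig : / Rabs (c1 - c2) * Rabs (c1 - c2) < INR k * Rabs (c1 - c2))
      by (apply Rmult_lt_compat_r; lra).
    rewrite Rinv_l in Hbig by lra. lra.
  - (* crossing lines: the floors agree only near the intersection *)
    exists O, (2 / Rabs (l1 - l2)). split.
    { apply Rlt_le, Rdiv_lt_0_compat; [lra|apply Rabs_pos_lt; lra]. }
    intros k _. destruct (lin_window (l1 - l2) (INR k * c1 - INR k * c2)) as [A HA]; [lra|].
    exists A. intros w [_ Hy1] [_ Hy2]. apply HA, floor_eq_dist. congruence.
Qed.

Lemma slope_product_lt_1 a1 b1 a2 b2 :
  x_major a1 b1 <> x_major a2 b2 -> Rabs (slope a1 b1 * slope a2 b2) < 1.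
Proof.
  intro Eb. rewrite Rabs_mult.
  pose proof (slope_abs_le_1 a1 b1). pose proof (slope_abs_le_1 a2 b2).
  pose proof (Rabs_pos (slope a1 b1)). pose proof (Rabs_pos (slope a2 b2)).
  destruct (x_major a1 b1) eqn:E1.
  - assert (E2 : x_major a2 b2 = false) by (destruct (x_major a2 b2); congruence).
    apply slope_abs_lt_1 in E2. nra.
  - apply slope_abs_lt_1 in E1. nra.
Qed.

Lemma common_points_window a1 b1 a2 b2 : a1 <> b1 -> a2 <> b2 ->
  meet_at_most_once a1 b1 a2 b2 ->
  exists (K : nat) (W : R), 0 <= W /\ forall k : nat, (K <= k)%nat -> exists A, forall z,
    lattice_seg (dilate (INR k) a1) (dilate (INR k) b1) z ->
    lattice_seg (dilate (INR k) a2) (dilate (INR k) b2) z ->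
    A <= IZR (fst (orient (x_major a1 b1) z)) <= A + W.
Proof.
  intros H1 H2 Honce.
  destruct (Bool.bool_dec (x_major a1 b1) (x_major a2 b2)) as [Eb|Eb].
  - destruct (same_axis_window (slope a1 b1) (icept a1 b1) (lo a1 b1) (hi a1 b1)
                               (slope a2 b2) (icept a2 b2) (lo a2 b2) (hi a2 b2))
      as [K [W [HW HK]]].
    { intros El Ec. apply collinear_ranges; auto. }
    exists (Nat.max K 1), W. split; auto. intros k Hk.
    assert (Hkpos : 0 < INR k) by (apply lt_0_INR; lia).
    destruct (HK k ltac:(lia)) as [A HA]. exists A. intros z Hz1 Hz2.
    rewrite lattice_seg_dilate in Hz1, Hz2 by auto. rewrite <- Eb in Hz2. apply HA; auto.
  - exists 1%nat, (4 / (1 - slope a1 b1 * slope a2 b2)).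
    pose proof (slope_product_lt_1 _ _ _ _ Eb) as Hlm. split.
    { apply Rlt_le, Rdiv_lt_0_compat; [lra|]. apply Rabs_def2 in Hlm. lra. }
    intros k Hk. assert (Hkpos : 0 < INR k) by (apply lt_0_INR; lia).
    destruct (cross_window (slope a1 b1) (slope a2 b2) (INR k * icept a1 b1)
                           (INR k * icept a2 b2) Hlm (slope_abs_le_1 a2 b2)) as [A HA].
    exists A. intros z Hz1 Hz2.
    rewrite lattice_seg_dilate in Hz1, Hz2 by auto.
    rewrite <- (orient_invol (x_major a1 b1) z), orient_cross in Hz2 by auto.
    destruct Hz1 as [_ Hy], Hz2 as [_ Hx]. simpl in Hx. eapply HA; eauto.
Qed.

(** * Counting a union of finite lists of lattice points *)

Definition Zpair_eq_dec : forall x y : Z * Z, {x = y} + {x <> y}.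
Proof. decide equality; apply Z.eq_dec. Defined.

Definition memb (l : list (Z * Z)) (z : Z * Z) : bool :=
  if in_dec Zpair_eq_dec z l then true else false.

Lemma memb_true l z : memb l z = true <-> In z l.
Proof. unfold memb. destruct (in_dec Zpair_eq_dec z l); split; auto; discriminate. Qed.

Fixpoint concat_upto (L : nat -> list (Z * Z)) (m : nat) : list (Z * Z) :=
  match m with O => nil | S m => concat_upto L m ++ L m end.

Lemma In_concat_upto L m z : In z (concat_upto L m) <-> exists r, (r < m)%nat /\ In z (L r).
Proof.
  induction m as [|m IH]; simpl.
  - split; [tauto|]. intros [r [Hr _]]. lia.
  - rewrite in_app_iff, IH. split.
    + intros [[r [Hr Hz]]|Hz]; [exists r; split; auto; lia|exists m; auto].
    + intros [r [Hr Hz]]. destruct (Nat.eq_dec r m); [subst; auto|left; exists r; split; auto; lia].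
Qed.

Lemma nodup_app_length_ge a b : NoDup b ->
  (length (nodup Zpair_eq_dec a) + length b
   <= length (nodup Zpair_eq_dec (a ++ b)) + length (filter (memb a) b))%nat.
Proof.
  intro Hb.
  assert (Hincl : (length (nodup Zpair_eq_dec a ++ filter (fun z => negb (memb a z)) b)
                   <= length (nodup Zpair_eq_dec (a ++ b)))%nat).
  { apply NoDup_incl_length.
    - apply NoDup_app; [apply NoDup_nodup|apply NoDup_filter; auto|].
      intros z Hz Hz'. apply nodup_In, memb_true in Hz. apply filter_In in Hz' as [_ Hz'].
      rewrite Hz in Hz'. discriminate.
    - intros z Hz. apply nodup_In, in_or_app. apply in_app_or in Hz as [Hz|Hz].
      + left. apply nodup_In in Hz; auto.
      + right. apply filter_In in Hz. tauto. }
  rewrite length_app in Hincl. pose proof (filter_length (memb a) b). lia.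
Qed.

Lemma filter_memb_app_length a c b :
  (length (filter (memb (a ++ c)) b)
   <= length (filter (memb a) b) + length (filter (memb c) b))%nat.
Proof.
  induction b as [|z b IH]; simpl; auto.
  destruct (memb (a ++ c) z) eqn:E.
  - apply memb_true, in_app_or in E.
    destruct E as [E|E]; apply memb_true in E; rewrite E; simpl;
      [destruct (memb c z)|destruct (memb a z)]; simpl; lia.
  - destruct (memb a z), (memb c z); simpl; lia.
Qed.

Lemma filter_memb_concat_upto L m b :
  INR (length (filter (memb (concat_upto L m)) b))
  <= rsum (fun i => INR (length (filter (memb (L i)) b))) m.
Proof.
  induction m as [|m IH]; simpl.
  - replace (length (filter (memb nil) b)) with O; [simpl; lra|].
    induction b; simpl; auto.
  - eapply Rle_trans; [apply le_INR, filter_memb_app_length|]. rewrite plus_INR. lra.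
Qed.

Lemma union_length_ge L m : (forall j, NoDup (L j)) ->
  rsum (fun j => INR (length (L j))) m
  - rsum (fun j => rsum (fun i => INR (length (filter (memb (L i)) (L j)))) j) m
  <= INR (length (nodup Zpair_eq_dec (concat_upto L m))).
Proof.
  intro HN. induction m as [|m IH]; simpl; [lra|].
  pose proof (nodup_app_length_ge (concat_upto L m) (L m) (HN m)) as Hstep.
  apply le_INR in Hstep. rewrite !plus_INR in Hstep.
  pose proof (filter_memb_concat_upto L m (L m)). lra.
Qed.

Lemma union_length_le L m :
  INR (length (nodup Zpair_eq_dec (concat_upto L m))) <= rsum (fun j => INR (length (L j))) m.
Proof.
  apply Rle_trans with (INR (length (concat_upto L m))).
  - apply le_INR, NoDup_incl_length; [apply NoDup_nodup|].
    intros z Hz. apply nodup_In in Hz. auto.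
  - induction m as [|m IH]; simpl; [lra|]. rewrite length_app, plus_INR. lra.
Qed.

Lemma rsum_le f g m : (forall r, (r < m)%nat -> f r <= g r) -> rsum f m <= rsum g m.
Proof.
  induction m as [|m IH]; simpl; intro H; [lra|].
  assert (f m <= g m) by (apply H; lia).
  assert (rsum f m <= rsum g m) by (apply IH; intros; apply H; lia). lra.
Qed.

Lemma rsum_ext f g m : (forall r, (r < m)%nat -> f r = g r) -> rsum f m = rsum g m.
Proof. intro H. apply Rle_antisym; apply rsum_le; intros r Hr; rewrite H; auto; lra. Qed.

Lemma rsum_nonneg f m : (forall r, (r < m)%nat -> 0 <= f r) -> 0 <= rsum f m.
Proof.
  intro H. apply Rle_trans with (rsum (fun _ => 0) m); [|apply rsum_le; auto].
  clear H. induction m; simpl; lra.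
Qed.

Lemma rsum_pos f m : (0 < m)%nat -> (forall r, (r < m)%nat -> 0 < f r) -> 0 < rsum f m.
Proof.
  destruct m as [|m]; simpl; intros Hm H; [lia|].
  assert (0 <= rsum f m) by (apply rsum_nonneg; intros r Hr; apply Rlt_le, H; lia).
  assert (0 < f m) by (apply H; lia). lra.
Qed.

Lemma rsum_scal c f m : rsum (fun r => c * f r) m = c * rsum f m.
Proof. induction m as [|m IH]; simpl; [ring|rewrite IH; ring]. Qed.

Lemma rsum_approx f g m : (forall r, (r < m)%nat -> g r - 1 <= f r <= g r + 1) ->
  rsum g m - INR m <= rsum f m <= rsum g m + INR m.
Proof.
  induction m as [|m IH]; intro H; cbn [rsum]; [simpl; lra|].
  rewrite S_INR. assert (g m - 1 <= f m <= g m + 1) by (apply H; lia).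
  assert (rsum g m - INR m <= rsum f m <= rsum g m + INR m) by (apply IH; intros; apply H; lia).
  lra.
Qed.

Definition ev_bounded (u : nat -> R) : Prop :=
  exists (K : nat) (C : R), forall k, (K <= k)%nat -> u k <= C.

Lemma ev_bounded_rsum (f : nat -> nat -> R) m :
  (forall i, (i < m)%nat -> ev_bounded (f i)) -> ev_bounded (fun k => rsum (fun i => f i k) m).
Proof.
  induction m as [|m IH]; intro H; simpl.
  - exists O, 0. intros. lra.
  - destruct IH as [K1 [C1 H1]]; [intros; apply H; lia|].
    destruct (H m ltac:(lia)) as [K2 [C2 H2]].
    exists (Nat.max K1 K2), (C1 + C2). intros k Hk.
    assert (rsum (fun i => f i k) m <= C1) by (apply H1; lia).
    assert (f m k <= C2) by (apply H2; lia). lra.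
Qed.

Lemma ratio_limit (N D : nat -> R) (a P : R) : 0 < P -> (forall k, D k = INR k * P) ->
  ev_bounded (fun k => Rabs (N k - INR k * a)) -> Un_cv (fun k => N k / D k) (a / P).
Proof.
  intros HP HD [K [E HE]] eps Heps.
  destruct (exists_nat_gt (E / (P * eps))) as [K0 HK0].
  exists (Nat.max (Nat.max K 1) K0). intros k Hk. unfold R_dist. rewrite HD.
  assert (Hk0 : 0 < INR k) by (apply lt_0_INR; lia).
  assert (HkP : 0 < INR k * P) by nra.
  assert (HEk : E < INR k * P * eps).
  { assert (E / (P * eps) < INR k) as Hlt by (eapply Rlt_le_trans; [apply HK0|apply le_INR; lia]).
    apply Rmult_lt_compat_r with (r := P * eps) in Hlt; [|nra].
    replace (E / (P * eps) * (P * eps)) with E in Hlt by (field; lra). nra. }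
  specialize (HE k ltac:(lia)).
  replace (N k / (INR k * P) - a / P) with ((N k - INR k * a) / (INR k * P)) by (field; lra).
  unfold Rdiv. rewrite Rabs_mult, (Rabs_pos_eq (/ _)) by (apply Rlt_le, Rinv_0_lt_compat; lra).
  apply Rmult_lt_reg_r with (INR k * P); auto.
  rewrite Rmult_assoc, Rinv_l by lra. lra.
Qed.

Definition dilated_points (a b : pt) (k : nat) : list (Z * Z) :=
  seg_points (dilate (INR k) a) (dilate (INR k) b).

Lemma overlap_ev_bounded a1 b1 a2 b2 : a1 <> b1 -> a2 <> b2 ->
  meet_at_most_once a1 b1 a2 b2 ->
  ev_bounded (fun k => INR (length (filter (memb (dilated_points a2 b2 k))
                                           (dilated_points a1 b1 k)))).
Proof.
  intros H1 H2 Honce. destruct (common_points_window a1 b1 a2 b2 H1 H2 Honce) as [K [W [HW HK]]].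
  exists (Nat.max K 1), (W + 1). intros k Hk. destruct (HK k ltac:(lia)) as [A HA].
  unfold dilated_points at 2, seg_points. rewrite filter_map_swap, length_map.
  apply ints_in_window_length with A; auto; [apply NoDup_filter, NoDup_ints_between|].
  intros u Hu. apply filter_In in Hu as [Hu Hmem].
  set (z := orient _ _) in Hmem.
  assert (Hz1 : In z (seg_points (dilate (INR k) a1) (dilate (INR k) b1)))
    by (apply in_map_iff; exists u; auto).
  apply memb_true in Hmem. apply In_seg_points in Hz1, Hmem.
  specialize (HA z Hz1 Hmem).
  unfold z in HA. rewrite x_major_dilate, orient_invol in HA by (apply lt_0_INR; lia).
  exact HA.
Qed.

Lemma nxt_cases n i : (i < n)%nat ->
  ((S i < n)%nat /\ nxt n i = S i) \/ (S i = n /\ nxt n i = O).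
Proof.
  intro H. unfold nxt. destruct (Nat.eq_dec (S i) n) as [E|E].
  - right. split; auto. rewrite E. apply Nat.Div0.mod_same.
  - left. split; [lia|]. apply Nat.mod_small. lia.
Qed.

Lemma nxt_not_mutual n i j : (3 <= n)%nat -> (i < n)%nat -> (j < n)%nat ->
  j = nxt n i -> i = nxt n j -> False.
Proof.
  intros H3 Hi Hj E1 E2.
  destruct (nxt_cases n i Hi) as [[A B]|[A B]]; destruct (nxt_cases n j Hj) as [[C D]|[C D]]; lia.
Qed.

Lemma simple_edges_meet_once n p i j : simple_polygon n p ->
  (i < n)%nat -> (j < n)%nat -> i <> j ->
  meet_at_most_once (p i) (p (nxt n i)) (p j) (p (nxt n j)).
Proof.
  intros [H3 [_ Hmeet]] Hi Hj Hij x y X1 X2 Y1 Y2.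
  destruct (Hmeet i j x Hi Hj Hij X1 X2) as [[A B]|[A B]];
  destruct (Hmeet i j y Hi Hj Hij Y1 Y2) as [[C D]|[C D]]; try congruence;
  exfalso; apply (nxt_not_mutual n i j); auto.
Qed.

Lemma pow2_pos x : x <> 0 -> 0 < x ^ 2.
Proof. intro Hx. rewrite <- Rsqr_pow2. apply Rsqr_pos_lt, Hx. Qed.

Lemma edist_pos a b : a <> b -> 0 < edist a b.
Proof.
  intro Hab. unfold edist. apply sqrt_lt_R0.
  pose proof (pow2_ge_0 (fst b - fst a)). pose proof (pow2_ge_0 (snd b - snd a)).
  destruct (Req_dec (fst b - fst a) 0) as [E1|E1];
    [destruct (Req_dec (snd b - snd a) 0) as [E2|E2]|].
  - exfalso. apply Hab. destruct a, b; simpl in *. f_equal; lra.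
  - pose proof (pow2_pos _ E2). lra.
  - pose proof (pow2_pos _ E1). lra.
Qed.

Lemma edist_dilate k a b : 0 <= k -> edist (dilate k a) (dilate k b) = k * edist a b.
Proof.
  intro Hk. unfold edist, dilate; cbn [fst snd].
  replace ((k * fst b - k * fst a) ^ 2 + (k * snd b - k * snd a) ^ 2)
    with (k ^ 2 * ((fst b - fst a) ^ 2 + (snd b - snd a) ^ 2)) by ring.
  rewrite sqrt_mult_alt, sqrt_pow2 by (apply pow2_ge_0 || auto). reflexivity.
Qed.

Lemma perimeter_pos n p : simple_polygon n p -> 0 < perimeter n p.
Proof.
  intros [H3 [Hnd _]]. apply rsum_pos; [lia|]. intros r Hr. apply edist_pos, Hnd, Hr.
Qed.

Lemma perimeter_scale n p k : perimeter n (scale k p) = INR k * perimeter n p.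
Proof.
  unfold perimeter. rewrite <- rsum_scal. apply rsum_ext. intros r _.
  apply (edist_dilate (INR k)), pos_INR.
Qed.

Definition edge_points (n : nat) (p : nat -> pt) (k r : nat) : list (Z * Z) :=
  dilated_points (p r) (p (nxt n r)) k.

Lemma lattice_poly_card n p k :
  is_card (lattice_poly n (scale k p))
          (length (nodup Zpair_eq_dec (concat_upto (edge_points n p k) n))).
Proof.
  exists (nodup Zpair_eq_dec (concat_upto (edge_points n p k) n)).
  split; [apply NoDup_nodup|split; auto].
  intro z. rewrite nodup_In, In_concat_upto. unfold lattice_poly, edge_points, dilated_points.
  setoid_rewrite In_seg_points. reflexivity.
Qed.

(* The sum of
   the edge counts is [k * sum_r extent(pi_r) + O(1)], and the union loses at
   most the pairwise overlaps, which stay bounded. *)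
Lemma lattice_poly_count_estimate n p : simple_polygon n p ->
  ev_bounded (fun k => Rabs (INR (length (nodup Zpair_eq_dec (concat_upto (edge_points n p k) n)))
                             - INR k * rsum (fun r => extent (p r) (p (nxt n r))) n)).
Proof.
  intro Hs. pose proof Hs as [_ [Hnd _]].
  set (overlap := fun k j i =>
         INR (length (filter (memb (edge_points n p k i)) (edge_points n p k j)))).
  assert (Hov : ev_bounded (fun k => rsum (fun j => rsum (overlap k j) j) n)).
  { apply (ev_bounded_rsum (fun j k => rsum (overlap k j) j)). intros j Hj.
    apply (ev_bounded_rsum (fun i k => overlap k j i)). intros i Hi.
    apply overlap_ev_bounded; try (apply Hnd; lia).
    apply simple_edges_meet_once; auto; lia. }
  destruct Hov as [K [C HC]].
  exists (Nat.max K 1), (INR n + C). intros k Hk.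
  assert (Hkpos : 0 < INR k) by (apply lt_0_INR; lia).
  assert (Hsum := rsum_approx (fun j => INR (length (edge_points n p k j)))
                              (fun r => INR k * extent (p r) (p (nxt n r))) n).
  rewrite rsum_scal in Hsum.
  specialize (Hsum ltac:(intros r _; apply seg_points_dilate_length; auto)).
  pose proof (union_length_ge (edge_points n p k) n
                (fun j => NoDup_seg_points _ _)) as Hlo.
  pose proof (union_length_le (edge_points n p k) n) as Hup.
  assert (Hov0 : 0 <= rsum (fun j => rsum (overlap k j) j) n).
  { apply rsum_nonneg. intros j _. apply rsum_nonneg. intros i _. apply pos_INR. }
  specialize (HC k ltac:(lia)). unfold overlap in *. apply Rabs_le. lra.
Qed.

Theorem lemma6p4 (n : nat) (p : nat -> pt) :
  simple_polygon n p ->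
  exists N : nat -> nat,
    (forall k : nat, is_card (lattice_poly n (scale k p)) (N k)) /\
    Un_cv (fun k => INR (N k) / perimeter n (scale k p))
      (rsum (fun r => / sqrt (1 + lam (edge_dir n p r) ^ 2)
                      * (edist (p r) (p (nxt n r)) / perimeter n p)) n).
Proof.
  intro Hs. pose proof Hs as [_ [Hnd _]].
  exists (fun k => length (nodup Zpair_eq_dec (concat_upto (edge_points n p k) n))).
  split; [apply lattice_poly_card|].
  replace (rsum _ n) with (rsum (fun r => extent (p r) (p (nxt n r))) n / perimeter n p).
  - apply ratio_limit; auto using perimeter_pos, perimeter_scale, lattice_poly_count_estimate.
  - unfold Rdiv. rewrite Rmult_comm, <- rsum_scal. apply rsum_ext. intros r Hr.
    rewrite <- extent_edist by auto. unfold edge_dir. ring.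
Qed.
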